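(* Let $d\ge2$, $\alpha\in\mathbb{R}$, and $f=x^{d-1}(\alpha x+dy)$, a real binary form of degree $d$. Then $f$ has real symmetric rank $d$, and its decompositions as a sum of $d$ real symmetric rank one terms are exactly (up to reordering) the expressions $$f=\sum_{i=1}^d\frac{(\lambda_ix+y)^d}{\prod_{j\ne i}(\lambda_i-\lambda_j)},$$ where $\lambda_1,\dots,\lambda_d\in\mathbb{R}$ are distinct and $\alpha=\lambda_1+\cdots+\lambda_d$.
   Context: Binary forms of degree $d$ are identified with symmetric tensors in $(\mathbb{R}^2)^{\otimes d}$ via $\mathcal{T}\leftrightarrow\sum_k\mathcal{T}(k_1|\dots|k_d)x_{k_1}\cdots x_{k_d}$ with $x_1=x$, $x_2=y$. A symmetric rank one term is $c\,\ell^d$ with $c\in\mathbb{R}$ and $\ell$ a real linear form; the symmetric rank is the minimal number of such terms summing to the form. *)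

From HB Require Import structures.
From mathcomp Require Import all_boot all_order all_algebra.
From mathcomp Require Import reals.
From mathcomp Require Import mpoly.
Set Implicit Arguments. Unset Strict Implicit. Unset Printing Implicit Defensive.
Import Order.TTheory GRing.Theory Num.Theory.
Local Open Scope ring_scope.

Notation bform R := {mpoly R[2]}.

Definition bx {R : realType} : bform R := 'X_(0 : 'I_2).
Definition by_ {R : realType} : bform R := 'X_(1 : 'I_2).

Definition linear_form {R : realType} (l : bform R) : Prop :=
  exists a b : R, l = a *: bx + b *: by_.

Definition sym_rank_one_term {R : realType} (d : nat) (p : bform R) : Prop :=
  exists (c : R) (l : bform R), linear_form l /\ p = c *: l ^+ d.

Definition sym_decomp {R : realType} (d : nat) (f : bform R) (s : seq (bform R)) : Prop :=
  (forall p, p \in s -> sym_rank_one_term d p) /\ \sum_(p <- s) p = f.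

Definition has_sym_rank {R : realType} (d : nat) (f : bform R) (r : nat) : Prop :=
  (exists s, size s = r /\ sym_decomp d f s) /\
  (forall s, sym_decomp d f s -> (r <= size s)%N).

Definition f_alpha {R : realType} (d : nat) (alpha : R) : bform R :=
  bx ^+ d.-1 * (alpha *: bx + d%:R *: by_).

Definition lam_term {R : realType} (d : nat) (lam : 'I_d -> R) (i : 'I_d) : bform R :=
  (\prod_(j < d | j != i) (lam i - lam j))^-1 *: (lam i *: bx + by_) ^+ d.
Arguments lam_term {R} d lam i.

From HB Require Import structures.
From mathcomp Require Import all_boot all_order all_algebra.
From mathcomp Require Import reals.
From mathcomp Require Import mpoly.
From mathcomp Require Import ring zify.

Set Implicit Arguments.
Unset Strict Implicit.
Unset Printing Implicit Defensive.

Import Order.TTheory GRing.Theory Num.Theory.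
Local Open Scope ring_scope.

(* Write a decomposition as f = \sum_i c_i (a_i x + b_i y)^d.  Comparing the
   coefficients of x^e y^(d-e), e < d, shows that the terms with b_i != 0,
   dehomogenised to weights w_i = c_i b_i^d and nodes l_i = a_i / b_i, satisfy
   \sum_i w_i l_i^e = [e == d-1] for all e <= d-1.  Hence \sum_i w_i p(l_i) is
   the coefficient of X^(d-1) in any polynomial p of degree < d; taking p monic
   and vanishing at all nodes shows that there are at least d distinct nodes.
   With exactly d terms, taking p = \prod_(j != i) (X - l_j) forces
   w_i = 1 / \prod_(j != i) (l_i - l_j), and the x^d coefficient gives
   alpha = \sum_i w_i l_i^d = \sum_i l_i.  Conversely, Lagrange interpolation
   shows that these weights have exactly these moments, so the terms sum to f. *)

Lemma size_monicB (R : nzRingType) (p q : {poly R}) :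
  p \is monic -> q \is monic -> size p = size q -> (size (p - q)%R < size p)%N.
Proof.
move=> mp mq spq.
have [n size_p] : exists n, size p = n.+1.
  by exists (size p).-1; rewrite prednK // size_poly_gt0 monic_neq0.
rewrite size_p ltnS; apply/leq_sizeP => j; rewrite coefB leq_eqVlt.
case/orP => [/eqP <-|lt_nj]; last by rewrite !nth_default ?subr0 -?spq ?size_p.
have := monicP mp; have := monicP mq.
by rewrite !lead_coefE -spq size_p /= => -> ->; rewrite subrr.
Qed.

Definition delta_moments (F : fieldType) (T : Type) (n : nat) (r : seq T)
    (w l : T -> F) : Prop :=
  forall e, (e <= n)%N -> \sum_(x <- r) w x * l x ^+ e = (e == n)%:R.

Section DeltaMoments.
Variables (F : fieldType) (T : eqType) (n : nat) (r : seq T) (w l : T -> F).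
Hypothesis moments : delta_moments n r w l.

Lemma delta_moments_horner (p : {poly F}) : (size p <= n.+1)%N ->
  \sum_(x <- r) w x * p.[l x] = p`_n.
Proof.
move=> sp.
under eq_bigr => x _ do rewrite (horner_coef_wide _ sp) mulr_sumr.
rewrite exchange_big /=.
under eq_bigr => k _.
  under eq_bigr => x _ do rewrite mulrCA.
  rewrite -mulr_sumr (moments (ltn_ord k)).
  over.
rewrite (bigD1 (Ordinal (ltnSn n))) //= eqxx mulr1 big1 ?addr0 // => k.
by rewrite -val_eqE /= => /negPf ->; rewrite mulr0.
Qed.

Lemma delta_moments_nodes : (n < size (undup [seq l x | x <- r]))%N.
Proof.
set B := undup _; rewrite ltnNge; apply/negP => sB.
pose p := \prod_(b <- B) ('X - b%:P) * 'X^(n - size B).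
have size_p : size p = n.+1.
  by rewrite size_mulXn ?monic_neq0 ?monic_prod_XsubC // size_prod_XsubC
    addnS subnK.
have := delta_moments_horner (eq_leq size_p).
rewrite big_seq big1 => [|x xr]; last first.
  suff /rootP -> : root p (l x) by rewrite mulr0.
  by rewrite rootM root_prod_XsubC mem_undup map_f.
have /monicP : p \is monic by rewrite monicMl ?monicXn ?monic_prod_XsubC.
by rewrite lead_coefE size_p => -> /esym/eqP; rewrite oner_eq0.
Qed.
End DeltaMoments.

Section Lagrange.
Variables (F : fieldType) (d : nat) (lam : 'I_d -> F).

Definition lagrange_num (i : 'I_d) : {poly F} :=
  \prod_(j | j != i) ('X - (lam j)%:P).

Definition lagrange_den (i : 'I_d) : F := \prod_(j | j != i) (lam i - lam j).

Lemma size_lagrange_num i : size (lagrange_num i) = d.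
Proof.
rewrite /lagrange_num -big_filter size_prod_XsubC.
have [e _ _ [_ ->]] := big_enumP (predC1 i).
by rewrite cardC1 card_ord; case: (d) i => [[]|].
Qed.

Lemma lagrange_num_coef_top i : (lagrange_num i)`_d.-1 = 1.
Proof.
have /monicP := monic_prod_XsubC (index_enum 'I_d) (predC1 i) lam.
by rewrite lead_coefE size_lagrange_num.
Qed.

Lemma horner_lagrange_num i j :
  (lagrange_num i).[lam j] = (j == i)%:R * lagrange_den i.
Proof.
rewrite horner_prod; have [->|ji] := eqVneq j i.
  by rewrite mul1r; apply: eq_bigr => k _; rewrite hornerXsubC.
by rewrite mul0r (bigD1 j) //= hornerXsubC subrr mul0r.
Qed.

Hypothesis lam_inj : injective lam.

Lemma lagrange_den_neq0 i : lagrange_den i != 0.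
Proof.
by apply/prodf_neq0 => j ji; rewrite subr_eq0 (inj_eq lam_inj) eq_sym.
Qed.

Lemma lagrange_interpolation (q : {poly F}) : (size q <= d)%N ->
  q = \sum_i (q.[lam i] / lagrange_den i) *: lagrange_num i.
Proof.
move=> sq; apply/eqP; rewrite -subr_eq0; apply/eqP.
apply: (@roots_geq_poly_eq0 _ _ [seq lam i | i <- enum 'I_d]).
- apply/allP => _ /mapP[j _ ->]; apply/rootP.
  rewrite hornerD hornerN horner_sum (bigD1 j) //= big1 => [|i ij]; last first.
    by rewrite hornerZ horner_lagrange_num eq_sym (negPf ij) mul0r mulr0.
  by rewrite hornerZ horner_lagrange_num eqxx mul1r divfK ?lagrange_den_neq0
    ?addr0 ?subrr.
- by rewrite map_inj_uniq ?enum_uniq.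
- rewrite size_map size_enum_ord (leq_trans (size_polyD _ _)) // geq_max sq.
  rewrite size_polyN (leq_trans (size_sum _ _ _)) //.
  apply/bigmax_leqP => i _.
  by rewrite (leq_trans (size_scale_leq _ _)) ?size_lagrange_num.
Qed.

Lemma lagrange_sum_coef (q : {poly F}) : (size q <= d)%N ->
  \sum_i q.[lam i] / lagrange_den i = q`_d.-1.
Proof.
move=> sq; rewrite [in RHS](lagrange_interpolation sq) coef_sum.
by apply: eq_bigr => i _; rewrite coefZ lagrange_num_coef_top mulr1.
Qed.

Lemma lagrange_delta_moments : (0 < d)%N ->
  delta_moments d.-1 (index_enum 'I_d) (fun i => (lagrange_den i)^-1) lam.
Proof.
move=> d_gt0 e le_e.
have sX : (size ('X^e : {poly F}) <= d)%N by rewrite size_polyXn -(prednK d_gt0).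
rewrite eq_sym -coefXn -(lagrange_sum_coef sX).
by apply: eq_bigr => i _; rewrite hornerXn mulrC.
Qed.

Lemma lagrange_moment_top : (0 < d)%N ->
  \sum_i (lagrange_den i)^-1 * lam i ^+ d = \sum_i lam i.
Proof.
move=> d_gt0; set P := \prod_(x <- [seq lam i | i <- enum 'I_d]) ('X - x%:P).
have size_P : size P = d.+1 by rewrite size_prod_XsubC size_map size_enum_ord.
have sq : (size ('X^d - P)%R <= d)%N.
  by rewrite -ltnS -[d.+1](size_polyXn F) size_monicB ?monicXn
    ?monic_prod_XsubC // size_P size_polyXn.
have := @coefPn_prod_XsubC _ [seq lam i | i <- enum 'I_d].
rewrite size_map size_enum_ord -lt0n -/P => /(_ d_gt0).
rewrite big_map big_enum /= => P_coef.
have top : ('X^d - P)`_d.-1 = \sum_i lam i.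
  by rewrite coefB coefXn ltn_eqF ?ltn_predL // sub0r P_coef opprK.
rewrite -top -(lagrange_sum_coef sq); apply: eq_bigr => i _.
have /rootP P_root : root P (lam i) by rewrite root_prod_XsubC map_f ?mem_enum.
by rewrite hornerD hornerN hornerXn P_root subr0 mulrC.
Qed.
End Lagrange.

Lemma delta_moments_injective (F : fieldType) (d : nat) (w lam : 'I_d -> F) :
  delta_moments d.-1 (index_enum 'I_d) w lam -> injective lam.
Proof.
move=> /delta_moments_nodes; rewrite [index_enum _]unlock -enumT => nodes.
apply/injectiveP; rewrite /injectiveb /dinjectiveb -[uniq _]negbK.
rewrite -ltn_size_undup size_map size_enum_ord -leqNgt.
exact: leq_trans (leqSpred d) nodes.
Qed.

Lemma delta_moments_weight (F : fieldType) (d : nat) (w lam : 'I_d -> F) :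
  delta_moments d.-1 (index_enum 'I_d) w lam ->
  forall i, w i = (lagrange_den lam i)^-1.
Proof.
move=> moments i; have lam_inj := delta_moments_injective moments.
have := delta_moments_horner moments (_ : size (lagrange_num lam i) <= d.-1.+1)%N.
rewrite size_lagrange_num leqSpred lagrange_num_coef_top => /(_ isT).
rewrite (bigD1 i) //= big1 => [|j ji]; last first.
  by rewrite horner_lagrange_num (negPf ji) mul0r mulr0.
rewrite horner_lagrange_num eqxx mul1r addr0.
move/(congr1 (fun x => x / lagrange_den lam i)).
by rewrite mulfK ?lagrange_den_neq0 // div1r.
Qed.

Definition bmonom (d k : nat) : 'X_{1..2} :=
  (U_(ord0) *+ (d - k) + U_(ord_max) *+ k)%MM.

Lemma eq_bmonom d k k' : (bmonom d k == bmonom d k') = (k == k').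
Proof.
apply/eqP/eqP => [|-> //] /(congr1 (fun m : 'X_{1..2} => m ord_max)).
by rewrite !mnmDE !mulmnE !mnm1E /= !mul1n.
Qed.

Section BinaryForms.
Variables (R : realType) (d : nat).

Definition bform_of_coefs (c : nat -> R) : bform R :=
  \sum_(k < d.+1) c k *: 'X_[bmonom d k].

Lemma mcoeff_bform_of_coefs c k : (k <= d)%N ->
  (bform_of_coefs c)@_(bmonom d k) = c k.
Proof.
move=> le_kd; rewrite raddf_sum (bigD1 (Ordinal (le_kd : (k < d.+1)%N))) //=.
rewrite mcoeffZ mcoeffX eqxx mulr1 big1 ?addr0 // => j.
by rewrite -val_eqE /= => kj; rewrite mcoeffZ mcoeffX eq_bmonom (negPf kj) mulr0.
Qed.

Lemma bform_of_coefs_inj c c' : bform_of_coefs c = bform_of_coefs c' ->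
  forall k, (k <= d)%N -> c k = c' k.
Proof.
by move=> eq_cc' k le_kd; rewrite -!(mcoeff_bform_of_coefs _ le_kd) eq_cc'.
Qed.

Lemma scale_bform_of_coefs a c :
  a *: bform_of_coefs c = bform_of_coefs (fun k => a * c k).
Proof. by rewrite scaler_sumr; apply: eq_bigr => k _; rewrite scalerA. Qed.

Lemma sum_bform_of_coefs (I : Type) (r : seq I) (c : I -> nat -> R) :
  \sum_(i <- r) bform_of_coefs (c i) = bform_of_coefs (fun k => \sum_(i <- r) c i k).
Proof.
by rewrite exchange_big; apply: eq_bigr => k _; rewrite scaler_suml.
Qed.

Lemma linear_form_expE a b : (a *: bx + b *: by_) ^+ d =
  bform_of_coefs (fun k => 'C(d, k)%:R * a ^+ (d - k) * b ^+ k).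
Proof.
rewrite exprDn; apply: eq_bigr => k _.
rewrite !exprZn /bx /by_ !mpolyXn -scalerAl -scalerAr scalerA -mpolyXD.
by rewrite -scaler_nat scalerA mulrA.
Qed.

End BinaryForms.

Lemma f_alphaE (R : realType) d (alpha : R) : (0 < d)%N -> f_alpha d alpha =
  bform_of_coefs d (fun k => if k == 0%N then alpha else if k == 1%N then d%:R else 0).
Proof.
case: d => // d _; rewrite /bform_of_coefs !big_ord_recl /= big1 => [|k _]; last first.
  by rewrite scale0r.
rewrite addr0 /f_alpha mulrDr -!scalerAr /bx /by_ mpolyXn -!mpolyXD.
congr (_ *: 'X_[_] + _ *: 'X_[_]); apply/mnmP => i;
  rewrite !mnmDE !mulmnE !mnm1E; case: i => [[|[|]]] //= _;
  by rewrite /bump /= ?mul1n ?mul0n ?addn0 ?subn0 ?addn1 ?subn1.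
Qed.

Section Decompositions.
Variables (R : realType) (d : nat).
Implicit Types (x : R * R * R) (t : seq (R * R * R)).

Definition rank_one_form x : bform R := x.1.1 *: (x.1.2 *: bx + x.2 *: by_) ^+ d.

Definition term_weight x : R := x.1.1 * x.2 ^+ d.

Definition term_node x : R := x.1.2 / x.2.

Lemma sym_rank_one_terms_map (s : seq (bform R)) :
  (forall p, p \in s -> sym_rank_one_term d p) -> exists t, s = map rank_one_form t.
Proof.
elim: s => [|p s IH] rank_one; first by exists [::].
have [|t ->] := IH; first by move=> q qs; apply: rank_one; rewrite inE qs orbT.
have [c [l [[a [b ->]] ->]]] := rank_one p (mem_head _ _).
by exists ((c, a, b) :: t).
Qed.

Lemma sum_rank_one_formsE t : \sum_(x <- t) rank_one_form x =
  bform_of_coefs d (fun k =>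
    \sum_(x <- t) x.1.1 * ('C(d, k)%:R * x.1.2 ^+ (d - k) * x.2 ^+ k)).
Proof.
rewrite -sum_bform_of_coefs; apply: eq_bigr => x _.
by rewrite /rank_one_form linear_form_expE scale_bform_of_coefs.
Qed.

Lemma rank_one_form_dehom x : x.2 != 0 ->
  rank_one_form x = term_weight x *: (term_node x *: bx + by_) ^+ d.
Proof.
case: x => [[c a] b] /= b_neq0; rewrite /rank_one_form /term_weight /term_node /=.
by rewrite -scalerA -exprZn scalerDr scalerA mulrC divfK ?scale1r.
Qed.

Lemma term_weight_node_exp x e : x.2 != 0 -> (e <= d)%N ->
  x.1.1 * (x.1.2 ^+ e * x.2 ^+ (d - e)) = term_weight x * term_node x ^+ e.
Proof.
move=> b_neq0 le_ed; rewrite /term_weight /term_node expr_div_n.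
rewrite -{2}(subnK le_ed) exprD.
by field; rewrite expf_neq0.
Qed.

Hypothesis d_gt0 : (0 < d)%N.

Lemma decomp_coefs (alpha : R) t :
  f_alpha d alpha = \sum_(x <- t) rank_one_form x ->
  forall k, (k <= d)%N ->
  \sum_(x <- t) x.1.1 * ('C(d, k)%:R * x.1.2 ^+ (d - k) * x.2 ^+ k) =
  if k == 0%N then alpha else if k == 1%N then d%:R else 0.
Proof.
rewrite sum_rank_one_formsE f_alphaE // => /bform_of_coefs_inj eq_coefs k.
by move/eq_coefs.
Qed.

Lemma decomp_delta_moments (alpha : R) t :
  f_alpha d alpha = \sum_(x <- t) rank_one_form x ->
  delta_moments d.-1 [seq x <- t | x.2 != 0] term_weight term_node.
Proof.
move=> decomp e le_e; have lt_ed : (e < d)%N by lia.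
have := decomp_coefs decomp (leq_subr e d); rewrite subKn; last exact: ltnW.
rewrite (bigID (fun x => x.2 != 0)) /= [X in _ + X]big1 => [|x /negPn/eqP b0].
  2: by rewrite b0 expr0n subn_eq0 leqNgt lt_ed /= !mulr0.
rewrite addr0 -big_filter.
under eq_big_seq => x /[!mem_filter]/andP[b_neq0 _].
  rewrite -[X in _ * X]mulrA mulrCA (term_weight_node_exp b_neq0 (ltnW lt_ed)).
  over.
rewrite /= -mulr_sumr subn_eq0 leqNgt lt_ed /=.
have [e_top|e_ntop] := eqVneq e d.-1.
  have -> : (d - e)%N = 1%N by lia.
  by rewrite bin1 -[RHS]mulr1 => /mulfI -> //; rewrite pnatr_eq0 -lt0n.
have -> : (d - e == 1)%N = false by apply/eqP; lia.
by move/eqP; rewrite mulf_eq0 pnatr_eq0 eqn0Ngt bin_gt0 leq_subr /= => /eqP.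
Qed.

Lemma decomp_top_moment (alpha : R) t :
  f_alpha d alpha = \sum_(x <- t) rank_one_form x -> all (fun x => x.2 != 0) t ->
  \sum_(x <- t) term_weight x * term_node x ^+ d = alpha.
Proof.
move=> decomp /allP b_neq0; have := decomp_coefs decomp (leq0n d); rewrite /= => <-.
apply: eq_big_seq => x /b_neq0 x2_neq0.
by rewrite -(term_weight_node_exp x2_neq0 (leqnn d)) bin0 subn0 subnn mul1r.
Qed.

Lemma decomp_y_terms_size_ge (alpha : R) t :
  f_alpha d alpha = \sum_(x <- t) rank_one_form x ->
  (d <= size [seq x <- t | (x.2 != 0)%R])%N.
Proof.
move/decomp_delta_moments/delta_moments_nodes => nodes.
rewrite (leq_trans (leqSpred d)) // (leq_trans nodes) //.
by rewrite (leq_trans (size_undup _)) ?size_map.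
Qed.

Lemma sym_decomp_size_ge (alpha : R) (s : seq (bform R)) :
  sym_decomp d (f_alpha d alpha) s -> (d <= size s)%N.
Proof.
case=> /sym_rank_one_terms_map[t ->]; rewrite big_map => /esym decomp.
rewrite size_map (leq_trans (decomp_y_terms_size_ge decomp)) //.
by rewrite size_filter count_size.
Qed.

Lemma minimal_sym_decomp (alpha : R) (s : seq (bform R)) :
  size s = d -> sym_decomp d (f_alpha d alpha) s ->
  exists lam : 'I_d -> R, [/\ injective lam, alpha = \sum_i lam i &
    s = [seq lam_term d lam i | i : 'I_d]].
Proof.
move=> size_s [/sym_rank_one_terms_map[t def_s]].
rewrite def_s big_map => /esym decomp.
have size_t : size t == d by rewrite -size_s def_s size_map.
have b_neq0 : all (fun x => x.2 != 0) t.
  by rewrite all_count eqn_leq count_size -size_filter (eqP size_t)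
    (decomp_y_terms_size_ge decomp).
pose tt := Tuple size_t.
pose lam i := term_node (tnth tt i); pose w i := term_weight (tnth tt i).
have moments : delta_moments d.-1 (index_enum 'I_d) w lam.
  have := decomp_delta_moments decomp; rewrite (all_filterP b_neq0).
  by move=> moments_t e /moments_t; rewrite (big_tuple _ _ tt).
have lam_inj := delta_moments_injective moments.
exists lam; split => //.
  rewrite -(decomp_top_moment decomp b_neq0) (big_tuple _ _ tt).
  rewrite -(lagrange_moment_top lam_inj d_gt0); apply: eq_bigr => i _.
  by rewrite -(delta_moments_weight moments).
rewrite -[t](map_tnth_enum tt) -map_comp; apply: eq_map => i /=.
rewrite rank_one_form_dehom ?(allP b_neq0 _ (mem_tnth i tt)) //.
by rewrite /lam_term -/(lagrange_den lam i) -(delta_moments_weight moments).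
Qed.

Lemma sum_lam_terms (lam : 'I_d -> R) : injective lam ->
  \sum_i lam_term d lam i = f_alpha d (\sum_i lam i).
Proof.
move=> lam_inj; rewrite f_alphaE //.
under eq_bigr => i _.
  rewrite /lam_term -[by_]scale1r linear_form_expE scale_bform_of_coefs.
  over.
rewrite sum_bform_of_coefs; apply: eq_bigr => k _; congr (_ *: _).
under eq_bigr => i _ do rewrite expr1n mulr1 mulrCA.
rewrite -mulr_sumr; case: k => [[|[|k]]] /= lt_kd.
- by rewrite bin0 subn0 mul1r lagrange_moment_top.
- by rewrite bin1 subn1 (lagrange_delta_moments lam_inj d_gt0 (leqnn _)) eqxx mulr1.
rewrite (lagrange_delta_moments lam_inj d_gt0 (_ : d - k.+2 <= d.-1)%N); last by lia.
by rewrite (_ : (d - k.+2 == d.-1)%N = false) ?mulr0 //; apply/eqP; lia.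
Qed.

Lemma sym_decomp_lam_terms (lam : 'I_d -> R) : injective lam ->
  sym_decomp d (f_alpha d (\sum_i lam i)) [seq lam_term d lam i | i : 'I_d].
Proof.
move=> lam_inj; split; last by rewrite big_image /= sum_lam_terms.
move=> _ /imageP[i _ ->]; exists (lagrange_den lam i)^-1, (lam i *: bx + by_).
by split=> //; exists (lam i), 1; rewrite scale1r.
Qed.

End Decompositions.

Lemma sym_decomp_perm (R : realType) (d : nat) (f : bform R)
    (s s' : seq (bform R)) :
  perm_eq s s' -> sym_decomp d f s -> sym_decomp d f s'.
Proof.
move=> eq_ss' [rank_one <-]; split; last by rewrite (perm_big _ eq_ss').
by move=> p; rewrite -(perm_mem eq_ss'); exact: rank_one.
Qed.

Lemma exists_injective_sum (R : numFieldType) (d : nat) (alpha : R) : (0 < d)%N ->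
  exists lam : 'I_d -> R, injective lam /\ alpha = \sum_i lam i.
Proof.
move=> d_gt0; pose beta := (alpha - \sum_(i < d) (i : nat)%:R) / d%:R.
exists (fun i => (i : nat)%:R + beta); split.
  by move=> i j /addIr /eqP; rewrite eqr_nat => /eqP /val_inj.
rewrite big_split /= sumr_const card_ord -mulr_natr divfK; last first.
  by rewrite pnatr_eq0 -lt0n.
by rewrite addrC subrK.
Qed.

Theorem lemma3p18 (R : realType) (d : nat) (alpha : R) :
  (2 <= d)%N ->
  has_sym_rank d (f_alpha d alpha) d /\
  (forall s : seq (bform R), size s = d ->
     (sym_decomp d (f_alpha d alpha) s <->
      exists lam : 'I_d -> R,
        [/\ injective lam, alpha = \sum_(i < d) lam i &
            perm_eq s [seq lam_term d lam i | i : 'I_d]])).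
Proof.
move=> d_ge2; have d_gt0 : (0 < d)%N by apply: ltnW.
split.
  split; last by move=> s; apply: sym_decomp_size_ge.
  have [lam0 [lam0_inj ->]] := exists_injective_sum alpha d_gt0.
  exists [seq lam_term d lam0 i | i : 'I_d]; rewrite size_image card_ord.
  by split=> //; apply: sym_decomp_lam_terms.
move=> s size_s; split.
  case/(minimal_sym_decomp d_gt0 size_s) => lam [lam_inj def_alpha ->].
  by exists lam; split.
case=> lam [lam_inj -> perm_s]; rewrite perm_sym in perm_s.
exact: sym_decomp_perm perm_s (sym_decomp_lam_terms d_gt0 lam_inj).
Qed.
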